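(* Let $T$ be a tree with exactly three pendant vertices $u_1,u_2,u_3$, and let $m$ be its major vertex, with $d(u_1,m)\equiv d(u_2,m)\equiv 1\pmod 3$. Then $1$ is an eigenvalue of $L(T)$.
   Context: $L(T)=D(T)-A(T)$ is the Laplacian matrix of the tree $T$. A pendant vertex has degree $1$; a major vertex has degree at least $3$ (a tree with exactly three pendant vertices has exactly one major vertex). $d$ denotes distance. *)

From HB Require Import structures.
From mathcomp Require Import all_boot all_order all_algebra.
Set Implicit Arguments. Unset Strict Implicit. Unset Printing Implicit Defensive.
Import Order.TTheory GRing.Theory Num.Theory.

Definition simple_graph n (e : rel 'I_n) := symmetric e /\ irreflexive e.

Definition is_tree n (e : rel 'I_n) :=
  [/\ simple_graph e,
      0 < n,
      forall x y, connect e x y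
    & ~ exists c : seq 'I_n, [/\ uniq c, 3 <= size c & cycle e c]].

Definition deg n (e : rel 'I_n) (v : 'I_n) : nat := #|[set w | e v w]|.

Definition dist_is n (e : rel 'I_n) (x y : 'I_n) (k : nat) :=
  (exists p : seq 'I_n, [/\ path e x p, last x p = y & size p = k]) /\
  (forall p : seq 'I_n, path e x p -> last x p = y -> k <= size p).

Local Open Scope ring_scope.
Definition laplacian (R : nzRingType) n (e : rel 'I_n) : 'M[R]_n :=
  diag_mx (\row_i ((deg e i)%:R : R)) - \matrix_(i, j) ((e i j)%:R : R).

From mathcomp Require Import all_boot all_order all_algebra.
From mathcomp Require Import zify ring.
Import GRing.Theory Num.Theory.
Set Implicit Arguments. Unset Strict Implicit. Unset Printing Implicit Defensive.

(* Root the tree at the major vertex m.  Every vertex other than m has exactly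
   one parent, so the numbers of children add up to n - 1; since leaves have
   no child, m has at least 3 and every other vertex at least 1, all these
   bounds are attained: T is a spider, three paths (legs) glued at m.
   The 6-periodic sequence wave = 0, 1, 1, 0, -1, -1, ... (a multiple of
   sin (k pi / 3)) satisfies wave k = wave (k - 1) + wave (k + 1), which is the
   equation (L x)_v = x_v at a vertex of degree 2 on a path.  Put wave (depth v)
   on the leg of u1, its opposite on the leg of u2 and 0 on the leg of u3: the
   equation at m holds because wave 0 = 0 and the two values wave 1 cancel, and
   the equation at the leaf u_i of depth d_i reduces to wave (d_i - 1) = 0,
   that is d_i = 1 mod 3. *)

Section Wave.
Variable R : nzRingType.
Local Open Scope ring_scope.

Definition wave (k : nat) : R :=
  match (k %% 6)%N with 1 | 2 => 1 | 4 | 5 => -1 | _ => 0 end.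

Lemma wave0 : wave 0 = 0. Proof. by []. Qed.
Lemma wave1 : wave 1 = 1. Proof. by []. Qed.

Lemma waveS k : wave k.+1 = wave k + wave k.+2.
Proof.
rewrite /wave -[k.+2]addn2 -[k.+1]addn1 -(modnDml k 1) -(modnDml k 2).
have : (k %% 6 < 6)%N by rewrite ltn_mod.
case: (k %% 6)%N => [|[|[|[|[|[|//]]]]]] _ /=;
  by rewrite ?addr0 ?add0r ?subrr ?addNr.
Qed.

Lemma wave_mod3 k : (k %% 3 = 0)%N -> wave k = 0.
Proof.
rewrite /wave -(modn_dvdm k (isT : (3 %| 6)%N)).
have : (k %% 6 < 6)%N by rewrite ltn_mod.
by case: (k %% 6)%N => [|[|[|[|[|[|//]]]]]].
Qed.

End Wave.

Lemma row_mul_laplacian (R : nzRingType) n (e : rel 'I_n) (x : 'I_n -> R) j :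
  symmetric e ->
  ((\row_i x i *m laplacian R e) 0 j = x j * (deg e j)%:R - \sum_(i | e j i) x i)%R.
Proof.
move=> e_sym; rewrite /laplacian mulmxBr mul_mx_diag !mxE; congr (_ - _)%R.
under eq_bigr do rewrite !mxE.
rewrite [RHS]big_mkcond; apply: eq_bigr => i _; rewrite e_sym.
by case: (e j i); rewrite ?mulr1 ?mulr0.
Qed.

Section RootedTree.
Variables (n : nat) (e : rel 'I_n) (r : 'I_n).
Hypothesis e_sym : symmetric e.
Hypothesis e_irr : irreflexive e.
Hypothesis e_conn : forall x y, connect e x y.
Hypothesis e_acyclic :
  ~ exists c : seq 'I_n, [/\ uniq c, 3 <= size c & cycle e c].

Lemma common_neighbour_in_walk v a b p :
  e v a -> e v b -> a != b -> path e a p -> last a p = b -> v \in a :: p.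
Proof.
move=> eva evb ab ap lp; apply/negPn/negP => vNp.
case: (shortenP ap) lp => q aq uq sub_qp lq.
apply: e_acyclic; exists [:: v, a & q]; split.
- rewrite cons_uniq uq andbT; apply: contra vNp.
  by rewrite !inE => /orP[->|/sub_qp ->]; rewrite ?orbT.
- by case: q {aq uq sub_qp} lq => [/= eab|//]; rewrite eab eqxx in ab.
- by rewrite /= eva rcons_path aq /= lq e_sym evb.
Qed.

Lemma rev_walk x p : path e x p ->
  path e (last x p) (rev (belast x p)) /\ last (last x p) (rev (belast x p)) = x.
Proof.
move=> xp; split; first by rewrite rev_path; apply: sub_path xp => a b; rewrite e_sym.
by case: p {xp} => //= y p; rewrite rev_cons last_rcons.
Qed.

Definition reaches_root k v :=
  [exists t : k.-tuple 'I_n, path e v t && (last v t == r)].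

Lemma reaches_rootP k v :
  reflect (exists p, [/\ path e v p, last v p = r & size p = k]) (reaches_root k v).
Proof.
apply: (iffP existsP) => [[t /andP[vt /eqP lt]]|[p [vp lp sp]]].
  by exists t; rewrite size_tuple.
have sp' : size p == k by rewrite sp.
by exists (Tuple sp'); rewrite /= vp lp eqxx.
Qed.

Lemma reaches_root_exists v : exists k, reaches_root k v.
Proof.
have /connectP[p vp lp] := e_conn v r.
by exists (size p); apply/reaches_rootP; exists p.
Qed.

Definition depth v := ex_minn (reaches_root_exists v).

Lemma depth_reaches v : reaches_root (depth v) v.
Proof. by rewrite /depth; case: ex_minnP. Qed.

Lemma depth_min v k : reaches_root k v -> depth v <= k.
Proof. by rewrite /depth; case: ex_minnP => d _ dmin /dmin. Qed.

Lemma dist_is_depth v d : dist_is e v r d -> depth v = d.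
Proof.
move=> [[p [vp lp sp]] dmin]; apply/eqP; rewrite eqn_leq.
rewrite -{1}sp depth_min ?andbT; last by apply/reaches_rootP; exists p.
by have /reaches_rootP[q [vq lq <-]] := depth_reaches v; apply: dmin.
Qed.

Lemma depth_eq0 v : (depth v == 0) = (v == r).
Proof.
apply/eqP/eqP => [dv0|->].
  have := depth_reaches v; rewrite dv0 => /reaches_rootP[p [_ lp sp]].
  by case: p lp sp.
by apply/eqP; rewrite -leqn0 depth_min //; apply/reaches_rootP; exists [::].
Qed.

Lemma depth_root : depth r = 0.
Proof. by apply/eqP; rewrite depth_eq0. Qed.

Lemma depth_gt0 v : v != r -> 0 < depth v.
Proof. by rewrite lt0n depth_eq0. Qed.

Lemma depth_edge v w : e v w -> depth v <= (depth w).+1.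
Proof.
move=> evw; apply: depth_min; have /reaches_rootP[p [wp lp sp]] := depth_reaches w.
by apply/reaches_rootP; exists (w :: p); rewrite /= evw wp lp sp.
Qed.

Lemma exists_parent v : v != r -> exists2 w, e v w & depth v = (depth w).+1.
Proof.
move=> vr; have /reaches_rootP[[|w p] [vp lp sp]] := depth_reaches v.
  by rewrite -lp eqxx in vr.
move: vp => /= /andP[evw wp]; exists w => //.
have : depth w <= size p by apply: depth_min; apply/reaches_rootP; exists p.
by have := depth_edge evw; rewrite -sp /=; lia.
Qed.

(* A shortest walk from a to the root cannot meet a vertex v with
   depth a <= depth v: the rest of the walk would be shorter than depth v. *)
Lemma geodesic_avoids a v q : path e a q -> last a q = r -> size q = depth a ->
  depth a <= depth v -> e v a -> v \notin a :: q.
Proof.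
move=> aq lq sq av eva; rewrite inE negb_or; apply/andP; split.
  by apply: contraTneq eva => ->; rewrite e_irr.
apply/negP => vq; case/splitPr: vq aq lq sq => q1 q2.
rewrite cat_path last_cat /= => /and3P[_ _ vq2] lq2 sq.
have : depth v <= size q2 by apply: depth_min; apply/reaches_rootP; exists q2.
by move: sq av; rewrite size_cat /=; lia.
Qed.

Lemma lower_neighbour_unique v a b : e v a -> e v b ->
  depth a <= depth v -> depth b <= depth v -> a = b.
Proof.
move=> eva evb av bv; apply/eqP/negPn/negP => ab.
have /reaches_rootP[qa [aqa lqa sqa]] := depth_reaches a.
have /reaches_rootP[qb [bqb lqb sqb]] := depth_reaches b.
have vNqa := geodesic_avoids aqa lqa sqa av eva.
have vNqb := geodesic_avoids bqb lqb sqb bv evb.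
have [rqb lrqb] := rev_walk bqb; rewrite lqb in rqb lrqb.
have := common_neighbour_in_walk (p := qa ++ rev (belast b qb)) eva evb ab.
rewrite cat_path aqa lqa last_cat lqa => /(_ rqb lrqb); apply/negP.
rewrite -cat_cons mem_cat negb_or vNqa mem_rev /=.
by apply: contra vNqb => /mem_belast.
Qed.

Lemma depth_adj v w : e v w -> depth w = (depth v).+1 \/ depth v = (depth w).+1.
Proof.
move=> evw; have vw := depth_edge evw.
have wv : depth w <= (depth v).+1 by apply: depth_edge; rewrite e_sym.
have [lt_vw|lt_wv|eq_vw] := ltngtP (depth v) (depth w); [left; lia | right; lia |].
exfalso; have [vr|vr] := eqVneq v r.
  move: eq_vw; rewrite vr depth_root => /esym/eqP; rewrite depth_eq0 => /eqP wr.
  by rewrite vr wr e_irr in evw.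
have [p evp vp] := exists_parent vr.
have pw : p = w by apply: (lower_neighbour_unique evp evw); lia.
by move: vp; rewrite pw; lia.
Qed.

Definition parent v := odflt v [pick w | e v w && (depth v == (depth w).+1)].

Lemma parent_root : parent r = r.
Proof. by rewrite /parent; case: pickP => //= w /andP[_]; rewrite depth_root. Qed.

Lemma parentP v : v != r -> e v (parent v) /\ depth v = (depth (parent v)).+1.
Proof.
move=> vr; rewrite /parent; case: pickP => [w /andP[evw /eqP dv]//|noparent].
by have [w evw dv] := exists_parent vr; have := noparent w; rewrite evw dv eqxx.
Qed.

Lemma parent_eq v w : e v w -> depth v = (depth w).+1 -> w = parent v.
Proof.
move=> evw dv; have vr : v != r by rewrite -depth_eq0 dv.
have [evp dp] := parentP vr; apply: (lower_neighbour_unique evw evp); lia.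
Qed.

Lemma edgeE v w :
  e v w = ((w != r) && (parent w == v)) || ((v != r) && (w == parent v)).
Proof.
apply/idP/idP => [evw|/orP[]/andP[xr /eqP pe]]; last 2 first.
- by rewrite -pe e_sym; case: (parentP xr).
- by rewrite pe; case: (parentP xr).
case: (depth_adj evw) => dvw.
  by rewrite -[w == r]depth_eq0 dvw /= -(parent_eq _ dvw) ?eqxx // e_sym.
by rewrite -[v == r]depth_eq0 dvw /= (parent_eq evw dvw) eqxx orbT.
Qed.

Definition children v := [set w | (w != r) && (parent w == v)].

Lemma childrenP v w : w \in children v -> e v w /\ depth w = (depth v).+1.
Proof.
rewrite inE => /andP[wr /eqP <-]; have [ewp dw] := parentP wr.
by rewrite e_sym.
Qed.

Lemma deg_children v : deg e v = #|children v| + (v != r).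
Proof.
rewrite /deg.
have -> : [set w | e v w] = children v :|: [set w | (v != r) && (w == parent v)].
  by apply/setP => w; rewrite !inE edgeE.
rewrite cardsU.
have -> : children v :&: [set w | (v != r) && (w == parent v)] = set0.
  apply/setP => w; rewrite !inE; apply/negbTE/negP.
  move=> /andP[/andP[wr /eqP pw] /andP[vr /eqP wp]].
  have [_ dw] := parentP wr; have [_ dv] := parentP vr.
  by rewrite pw in dw; rewrite -wp in dv; lia.
rewrite cards0 subn0; congr (_ + _).
case: (eqVneq v r) => [_|vr] /=.
  by apply/eqP; rewrite cards_eq0; apply/eqP/setP => w; rewrite !inE.
by rewrite (_ : [set w | _] = [set parent v]) ?cards1 //; apply/setP => w; rewrite !inE.
Qed.

Lemma sum_card_children : \sum_v #|children v| = n.-1.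
Proof.
under eq_bigr => v _ do rewrite -sum1_card.
under eq_bigr => v _ do under eq_bigl => w do rewrite inE.
by rewrite -(partition_big (P := fun w => w != r)) // sum1_card cardC1 card_ord.
Qed.

Lemma depth_iter_parent k v : depth (iter k parent v) = depth v - k.
Proof.
elim: k => [|k IH]; first by rewrite subn0.
rewrite iterS; case: (eqVneq (iter k parent v) r) => [vr|vr].
  by rewrite vr parent_root depth_root; move: IH; rewrite vr depth_root; lia.
by have [_ dp] := parentP vr; move: IH; rewrite dp; lia.
Qed.

Definition ancestor u v := iter (depth u - depth v) parent u == v.

Lemma ancestor_root u : ancestor u r.
Proof.
by rewrite /ancestor depth_root subn0 -depth_eq0 depth_iter_parent subnn.
Qed.

Lemma ancestor_childless u z :
  z != r -> children z = set0 -> ancestor u z -> z = u.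
Proof.
rewrite /ancestor => zr0 noch; case: (depth u - depth z) => [/eqP //|k].
rewrite iterS => /eqP pz; have zr : iter k parent u != r.
  by apply: contraNneq zr0 => ur; rewrite -pz ur parent_root.
by have := noch; rewrite -pz => /setP/(_ (iter k parent u)); rewrite !inE zr eqxx.
Qed.

Local Notation top u := (iter (depth u).-1 parent u).

Lemma top_child_root u : u != r -> top u \in children r.
Proof.
move=> ur; have du := depth_gt0 ur.
have dc : depth (top u) = 1 by rewrite depth_iter_parent; lia.
have cr : top u != r by rewrite -depth_eq0 dc.
by rewrite inE cr -iterS prednK // -depth_eq0 depth_iter_parent subnn.
Qed.

Lemma ancestor_childE u i :
  i \in children r -> ancestor u i = (top u == i).
Proof.
by move=> /childrenP[_ di]; rewrite /ancestor di depth_root subn1.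
Qed.

Section Sums.
Local Open Scope ring_scope.
Variable V : nmodType.

Lemma sum_neighbours (x : 'I_n -> V) v : v != r ->
  \sum_(w | e v w) x w = x (parent v) + \sum_(w in children v) x w.
Proof.
move=> vr; have [evp dv] := parentP vr.
rewrite (bigD1 (parent v)) //=; congr (_ + _); apply: eq_bigl => w.
rewrite inE edgeE vr /=; apply/idP/idP.
  by case/andP => /orP[//|/eqP ->]; rewrite eqxx.
move=> /andP[wr /eqP pw]; rewrite wr pw eqxx /=.
by apply/eqP => wp; have [_ dw] := parentP wr; move: dw dv; rewrite pw wp; lia.
Qed.

Lemma sum_neighbours_root (x : 'I_n -> V) :
  \sum_(w | e r w) x w = \sum_(w in children r) x w.
Proof. by apply: eq_bigl => w; rewrite inE edgeE eqxx /= orbF. Qed.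

End Sums.

Section Spider.
Variable U : {set 'I_n}.
Hypothesis card_U : #|U| = 3.
Hypothesis leavesE : forall v, (v \in U) = (deg e v == 1).
Hypothesis deg_root : 3 <= deg e r.

Lemma root_notin_leaves : r \notin U.
Proof. by rewrite leavesE; apply: contraTneq deg_root => ->. Qed.

Lemma leaf_neq_root u : u \in U -> u != r.
Proof. by apply: contraTneq => ->; apply: root_notin_leaves. Qed.

Definition spider_arity v := if v \in U then 0 else if v == r then 3 else 1.

(* The arities are lower bounds for the numbers of children whose sum,
   n - 1, is also the sum of the arities. *)
Lemma card_children_spider v : #|children v| = spider_arity v.
Proof.
have arity_le w : spider_arity w <= #|children w|.
  rewrite /spider_arity; case: ifP => // wU; case: eqP => [->|/eqP wr].
    by move: deg_root; rewrite deg_children eqxx addn0.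
  by move/negbT: wU; rewrite leavesE deg_children wr; lia.
have sum_arity : \sum_w spider_arity w = n.-1.
  have arityE w : spider_arity w + (w \in U) = 1 + (w == r).*2.
    rewrite /spider_arity; case: (eqVneq w r) => [->|_].
      by rewrite (negbTE root_notin_leaves).
    by case: (w \in U).
  have : \sum_w (spider_arity w + (w \in U)) = n + 2.
    under eq_bigr => w _ do rewrite arityE.
    rewrite big_split /= sum_nat_const card_ord muln1.
    by rewrite (bigD1 r) //= eqxx big1 // => w /negbTE ->.
  have sum_U : \sum_w ((w \in U) : nat) = 3.
    rewrite -card_U -sum1_card [RHS]big_mkcond /=.
    by apply: eq_bigr => w _; case: (w \in U).
  by rewrite big_split /= sum_U; have := ltn_ord r; lia.
have := leqif_sum (P := predT) (fun w _ => leqif_eq (arity_le w)).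
rewrite sum_arity sum_card_children => -[_].
by rewrite eqxx => /esym/forallP/(_ v)/eqP.
Qed.

Lemma children_leaf v : v \in U -> children v = set0.
Proof. by move=> vU; apply/eqP; rewrite -cards_eq0 card_children_spider /spider_arity vU. Qed.

Lemma child_unique v a b : v \notin U -> v != r ->
  a \in children v -> b \in children v -> a = b.
Proof.
move=> vU vr; have /cards1P[c ->] : #|children v| == 1.
  by rewrite card_children_spider /spider_arity (negbTE vU) (negbTE vr).
by rewrite !inE => /eqP-> /eqP->.
Qed.

Lemma parent_notin_leaves w : w != r -> parent w \notin U.
Proof.
move=> wr; apply/negP => /children_leaf/setP/(_ w).
by rewrite !inE wr eqxx.
Qed.

Lemma ancestor_edge u v w : u \in U -> ancestor u v -> v != r -> e v w -> ancestor u w.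
Proof.
rewrite /ancestor => uU; set k := depth u - depth v => /eqP uv vr.
have dv : depth v = depth u - k by rewrite -uv depth_iter_parent.
have dv_gt0 := depth_gt0 vr.
rewrite edgeE => /orP[/andP[wr /eqP pw]|/andP[_ /eqP ->]]; last first.
  have [_ dp] := parentP vr.
  have -> : depth u - depth (parent v) = k.+1 by move: dp dv dv_gt0; rewrite /k; lia.
  by rewrite iterS uv.
move: uv dv; case: k => [|k] /= uv dv.
  by have := children_leaf uU; rewrite uv => /setP/(_ w); rewrite !inE wr pw eqxx.
set c := iter k parent u in uv *.
have cr : c != r by apply: contraNneq vr => cr; rewrite -uv cr parent_root.
have vU : v \notin U by rewrite -uv parent_notin_leaves.
have -> : w = c by apply: (child_unique vU vr); rewrite inE ?wr ?cr ?pw ?uv ?eqxx.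
rewrite /c depth_iter_parent.
by have -> : depth u - (depth u - k) = k by move: dv dv_gt0; lia.
Qed.

Lemma iter_parent_disjoint u1 u2 : u1 \in U -> u2 \in U -> u1 != u2 ->
  forall k1 k2, iter k1 parent u1 = iter k2 parent u2 -> iter k1 parent u1 = r.
Proof.
move=> u1U u2U u12; elim=> [|k1 IH] [|k2] /= eq12.
- by rewrite eq12 eqxx in u12.
- have [cr|cr] := eqVneq (iter k2 parent u2) r; first by rewrite eq12 cr parent_root.
  by have := parent_notin_leaves cr; rewrite -eq12 u1U.
- have [cr|cr] := eqVneq (iter k1 parent u1) r; first by rewrite cr parent_root.
  by have := parent_notin_leaves cr; rewrite eq12 u2U.
have [c1r|c1r] := eqVneq (iter k1 parent u1) r; first by rewrite c1r parent_root.
have [c2r|c2r] := eqVneq (iter k2 parent u2) r; first by rewrite eq12 c2r parent_root.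
apply/eqP/negPn/negP => vr.
have eq_c : iter k1 parent u1 = iter k2 parent u2.
  by apply: (child_unique (parent_notin_leaves c1r) vr); rewrite inE ?c1r ?c2r ?eq12 eqxx.
by rewrite (IH _ eq_c) eqxx in c1r.
Qed.

Lemma ancestor_disjoint u1 u2 v : u1 \in U -> u2 \in U -> u1 != u2 ->
  ancestor u1 v -> ancestor u2 v -> v = r.
Proof.
move=> u1U u2U u12 /eqP v1 /eqP v2.
by rewrite -v1; apply: (iter_parent_disjoint u1U u2U u12 (etrans v1 (esym v2))).
Qed.

Section Eigenvector.
Local Open Scope ring_scope.
Variable R : fieldType.

Lemma leg_equation (x : 'I_n -> R) (s : R) u j :
  u \in U -> (depth u %% 3 = 1)%N ->
  (forall i, ancestor u i -> x i = s * wave R (depth i)) ->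
  ancestor u j -> j != r -> x j * (deg e j)%:R - \sum_(i | e j i) x i = x j.
Proof.
move=> uU du x_leg uj jr; rewrite sum_neighbours // deg_children jr.
have [ejp djp] := parentP jr; set d := depth (parent j) in djp *.
have -> : \sum_(i in children j) x i = (s * wave R d.+2) *+ #|children j|.
  rewrite -sumr_const; apply: eq_bigr => i ji; have [eji di] := childrenP ji.
  by rewrite x_leg ?di ?djp // (ancestor_edge uU uj jr eji).
rewrite (x_leg _ (ancestor_edge uU uj jr ejp)) (x_leg _ uj) djp.
case: (boolP (j \in U)) => jU.
  have ju : j = u := ancestor_childless jr (children_leaf jU) uj.
  rewrite children_leaf // cards0 mulr0n addr0 (@wave_mod3 R d) ?mulr0 ?subr0 ?mulr1 //.
  by move: du; rewrite -ju djp; lia.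
rewrite card_children_spider /spider_arity (negbTE jU) (negbTE jr) mulr1n.
by rewrite (waveS R d) -[(1 + true)%N]/2%N; ring.
Qed.

Variables u1 u2 : 'I_n.
Hypotheses (u1U : u1 \in U) (u2U : u2 \in U) (u12 : u1 != u2).
Hypotheses (du1 : (depth u1 %% 3 = 1)%N) (du2 : (depth u2 %% 3 = 1)%N).

Definition spider_vector i : R :=
  if ancestor u1 i then wave R (depth i)
  else if ancestor u2 i then - wave R (depth i) else 0.

Lemma spider_vector_leg1 i : ancestor u1 i -> spider_vector i = 1 * wave R (depth i).
Proof. by rewrite /spider_vector mul1r => ->. Qed.

Lemma spider_vector_leg2 i : ancestor u2 i -> spider_vector i = -1 * wave R (depth i).
Proof.
rewrite /spider_vector mulN1r => u2i; rewrite u2i; case: ifP => // u1i.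
by rewrite (ancestor_disjoint u1U u2U u12 u1i u2i) depth_root wave0 oppr0.
Qed.

Lemma spider_vector_off i :
  ~~ ancestor u1 i -> ~~ ancestor u2 i -> spider_vector i = 0.
Proof. by rewrite /spider_vector => /negbTE-> /negbTE->. Qed.

Lemma spider_vector_root : spider_vector r = 0.
Proof. by rewrite spider_vector_leg1 ?ancestor_root // depth_root wave0 mulr0. Qed.

Lemma spider_vector_children_root i : i \in children r ->
  spider_vector i = (top u1 == i)%:R - (top u2 == i)%:R.
Proof.
move=> ri; have [_ di] := childrenP ri; rewrite depth_root in di.
have ir : i != r by rewrite -depth_eq0 di.
rewrite /spider_vector -!ancestor_childE // di wave1.
have := ancestor_disjoint u1U u2U u12 (v := i).
case: (ancestor u1 i) (ancestor u2 i) => [] [] disj /=; rewrite ?subr0 ?sub0r //.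
by rewrite (disj isT isT) eqxx in ir.
Qed.

Lemma spider_vector_eq j :
  spider_vector j * (deg e j)%:R - \sum_(i | e j i) spider_vector i = spider_vector j.
Proof.
have [->|jr] := eqVneq j r.
  rewrite spider_vector_root mul0r sub0r sum_neighbours_root; apply/eqP.
  rewrite oppr_eq0; apply/eqP.
  under eq_bigr => i ri do rewrite spider_vector_children_root //.
  have sum_top u : u \in U -> \sum_(i in children r) ((top u == i)%:R : R) = 1.
    move=> uU; rewrite (bigD1 (top u)) ?top_child_root ?leaf_neq_root //= eqxx.
    by rewrite big1 ?addr0 // => i /andP[_]; rewrite eq_sym => /negbTE ->.
  by rewrite sumrB !sum_top ?subrr.
have [u1j|u1j] := boolP (ancestor u1 j).
  exact: (leg_equation u1U du1 spider_vector_leg1 u1j jr).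
have [u2j|u2j] := boolP (ancestor u2 j).
  exact: (leg_equation u2U du2 spider_vector_leg2 u2j jr).
rewrite spider_vector_off // mul0r sub0r big1 ?oppr0 // => i eji.
have [->|ir] := eqVneq i r; first exact: spider_vector_root.
rewrite e_sym in eji.
apply: spider_vector_off.
  by apply: contraNN u1j => u1i; apply: ancestor_edge u1U u1i ir eji.
by apply: contraNN u2j => u2i; apply: ancestor_edge u2U u2i ir eji.
Qed.

Lemma spider_vector_neq0 : \row_i spider_vector i != 0.
Proof.
have r_top1 := top_child_root (leaf_neq_root u1U); have [_ d1] := childrenP r_top1.
apply/eqP => /rowP/(_ (top u1)); rewrite !mxE.
rewrite spider_vector_leg1 ?ancestor_childE // d1 depth_root wave1 mul1r.
by move/eqP; rewrite oner_eq0.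
Qed.

Lemma spider_eigenvalue1 : eigenvalue (laplacian R e) 1.
Proof.
apply/eigenvalueP; exists (\row_i spider_vector i); last exact: spider_vector_neq0.
by apply/rowP => j; rewrite row_mul_laplacian // spider_vector_eq scale1r mxE.
Qed.

End Eigenvector.

End Spider.

End RootedTree.

Unset Implicit Arguments.
Local Open Scope ring_scope.
Theorem mainTheorem4 (R : realFieldType) (n : nat) (e : rel 'I_n)
    (u1 u2 u3 m : 'I_n) (d1 d2 : nat) :
  is_tree e ->
  [&& u1 != u2, u1 != u3 & u2 != u3] ->
  [set v | deg e v == 1%N] = [set u1; u2; u3] ->
  (3 <= deg e m)%N ->
  dist_is e u1 m d1 -> dist_is e u2 m d2 ->
  d1 = 1 %[mod 3] -> d2 = 1 %[mod 3] ->
  eigenvalue (laplacian R e) 1.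
Proof.
move=> [[e_sym e_irr] _ e_conn e_acyclic] /and3P[u12 u13 u23] leavesE deg_m.
move=> /(dist_is_depth e_conn) <- /(dist_is_depth e_conn) <- du1 du2.
have card_U : #|[set u1; u2; u3]| = 3%N.
  by rewrite -setUA cardsU1 cards2 u23 !inE negb_or u12 u13.
have leaves v : (v \in [set u1; u2; u3]) = (deg e v == 1%N) by rewrite -leavesE inE.
have u1U : u1 \in [set u1; u2; u3] by rewrite !inE eqxx.
have u2U : u2 \in [set u1; u2; u3] by rewrite !inE eqxx orbT.
by apply: (spider_eigenvalue1 e_sym e_irr e_acyclic card_U leaves deg_m R u1U u2U u12);
  rewrite ?du1 ?du2.
Qed.
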